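(* Let $X$ be a Banach algebra with unit element $\mathbf{1}$. Suppose $h:X\to X$ satisfies $$\|h(xyx)-h(x)yx-xh(y)x-xyh(x)\|\le\theta(\|x\|^p+\|y\|^q+\|x\|^r\|y\|^s),$$ $$\|h(x+y)-h(x)-h(y)\|\le\theta(\|x\|^p+\|y\|^q+\|x\|^r\|y\|^s)$$ for all $x,y\in X$, for some constants $\theta,p,q,r,s\in(0,1)$ with $r+s<1$. Then $h$ is a Jordan triple derivation.
   Context: A Jordan triple derivation on an algebra $X$ is an additive map $D:X\to X$ with $D(xyx)=D(x)yx+xD(y)x+xyD(x)$ for all $x,y\in X$. *)

From HB Require Import structures.
From mathcomp Require Import all_boot all_order all_algebra.
From mathcomp Require Import all_classical all_reals all_analysis.
Set Implicit Arguments. Unset Strict Implicit. Unset Printing Implicit Defensive.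
Import Order.TTheory GRing.Theory Num.Theory.
Import numFieldNormedType.Exports.
Local Open Scope ring_scope.

(* A unital real Banach algebra structure on a real Banach space V:
   a multiplication [mul] and a unit [one] making V an associative unital
   R-algebra, with submultiplicative norm and `|one| = 1.
   (A complex Banach algebra is in particular a real Banach algebra by
   restriction of scalars, so this covers both cases.) *)
Record banach_algebra (R : realType) (V : completeNormedModType R)
    (mul : V -> V -> V) (one : V) : Prop := BanachAlgebra {
  ba_mulA : forall x y z, mul x (mul y z) = mul (mul x y) z ;
  ba_mul1l : forall x, mul one x = x ;
  ba_mul1r : forall x, mul x one = x ;
  ba_mulDl : forall x y z, mul (x + y) z = mul x z + mul y z ;
  ba_mulDr : forall x y z, mul x (y + z) = mul x y + mul x z ;
  ba_scalerAl : forall (a : R) x y, mul (a *: x) y = a *: mul x y ;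
  ba_scalerAr : forall (a : R) x y, mul x (a *: y) = a *: mul x y ;
  ba_normM : forall x y, `|mul x y| <= `|x| * `|y| ;
  ba_norm1 : `|one| = 1
}.

Definition jordan_triple_derivation (V : zmodType) (mul : V -> V -> V)
    (D : V -> V) : Prop :=
  (forall x y, D (x + y) = D x + D y) /\
  (forall x y, D (mul (mul x y) x)
      = mul (mul (D x) y) x + mul (mul x (D y)) x + mul (mul x y) (D x)).

From HB Require Import structures.
From mathcomp Require Import all_boot all_order all_algebra.
From mathcomp Require Import all_classical all_reals all_analysis.
From mathcomp Require Import lra.
Import Order.TTheory GRing.Theory Num.Theory.
Import numFieldNormedType.Exports.
Local Open Scope ring_scope.
Set Implicit Arguments. Unset Strict Implicit.

(* Write t = c^2 and e = c 1.  The triple defect of h at (e, z) is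
   h(tz) - t h(z) - c (h(e) z + z h(e)), whose last term is additive in z;
   taking the Cauchy difference in z therefore expresses t (h(x+y) - h x - h y)
   through Cauchy and triple defects of norm O(t^g) for some g < 1, because
   all exponents of the control function are below 1.  Letting t -> oo forces
   h to be additive.  Then h(n x) = n h(x), so the triple defect at (n x, y)
   is n^2 times the one at (x, y) while its bound is O(n^g): it vanishes. *)

Section CauchyDifference.
Variable V : zmodType.
Implicit Types (f g : V -> V) (x y z : V).

Lemma subrACA (a b c d : V) : a - b - (c - d) = a - c - (b - d).
Proof. by rewrite opprD addrACA -opprD. Qed.

Definition add_defect f x y := f (x + y) - f x - f y.

Lemma add_defect_eq0 f x y : add_defect f x y = 0 <-> f (x + y) = f x + f y.
Proof.
rewrite /add_defect -addrA -opprD; split=> [/eqP|->]; last exact: subrr.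
by rewrite subr_eq0 => /eqP.
Qed.

Lemma add_defectB f g x y :
  add_defect (f \- g) x y = add_defect f x y - add_defect g x y.
Proof.
by rewrite /add_defect /= (subrACA (f (x + y))) (subrACA (f (x + y) - f x)).
Qed.

Lemma additive_mulrn f z n :
  (forall x y, f (x + y) = f x + f y) -> f (z *+ n) = f z *+ n.
Proof.
move=> fD; have f0 : f 0 = 0 by apply: (@addrI _ (f 0)); rewrite -fD !addr0.
by elim: n => [|n IHn]; rewrite ?mulr0n // !mulrS fD IHn.
Qed.

End CauchyDifference.

Lemma norm_add_defect_le (R : numDomainType) (V : normedZmodType R) (f : V -> V) x y :
  `|add_defect f x y| <= `|f (x + y)| + `|f x| + `|f y|.
Proof. by rewrite /add_defect !(le_trans (ler_normB _ _)) ?lerD ?ler_normB. Qed.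

Definition triple_defect (V : zmodType) (mul : V -> V -> V) (h : V -> V) x y :=
  h (mul (mul x y) x) - mul (mul (h x) y) x - mul (mul x (h y)) x
    - mul (mul x y) (h x).

Lemma triple_defect_eq0 (V : zmodType) (mul : V -> V -> V) h x y :
  triple_defect mul h x y = 0 <->
  h (mul (mul x y) x)
    = mul (mul (h x) y) x + mul (mul x (h y)) x + mul (mul x y) (h x).
Proof.
rewrite /triple_defect -!addrA -!opprD addrA; split=> [/eqP|->]; last exact: subrr.
by rewrite subr_eq0 => /eqP.
Qed.

Section TripleDefectScaling.
Variables (R : realType) (X : completeNormedModType R) (mul : X -> X -> X) (one : X).
Hypothesis hX : banach_algebra mul one.
Variable h : X -> X.

Lemma triple_defect_scale1 (c : R) z :
  triple_defect mul h (c *: one) z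
  = h (c ^+ 2 *: z) - c ^+ 2 *: h z
      - c *: (mul (h (c *: one)) z + mul z (h (c *: one))).
Proof.
rewrite /triple_defect !(ba_scalerAl hX, ba_scalerAr hX, ba_mul1l hX, ba_mul1r hX).
by rewrite !scalerA -expr2 scalerDr opprD addrA; congr (_ - _); exact: addrAC.
Qed.

Lemma add_defect_scale (c : R) x y :
  c ^+ 2 *: add_defect h x y
  = add_defect h (c ^+ 2 *: x) (c ^+ 2 *: y)
      - add_defect (triple_defect mul h (c *: one)) x y.
Proof.
pose u := h (c *: one).
have -> : triple_defect mul h (c *: one)
    = (fun z => h (c ^+ 2 *: z)) \- (fun z => c ^+ 2 *: h z)
        \- (fun z => c *: (mul u z + mul z u)).
  by apply/funext => z; rewrite triple_defect_scale1.
rewrite !add_defectB.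
have -> : add_defect (fun z => c *: (mul u z + mul z u)) x y = 0.
  by apply/add_defect_eq0; rewrite (ba_mulDr hX) (ba_mulDl hX) -scalerDr addrACA.
have -> : add_defect (fun z => h (c ^+ 2 *: z)) x y
    = add_defect h (c ^+ 2 *: x) (c ^+ 2 *: y) by rewrite /add_defect scalerDr.
have -> : add_defect (fun z => c ^+ 2 *: h z) x y = c ^+ 2 *: add_defect h x y.
  by rewrite /add_defect !scalerBr.
by rewrite subr0 opprB addrC subrK.
Qed.

Lemma triple_defect_scale_nat (n : nat) x y :
  (forall x y, h (x + y) = h x + h y) ->
  triple_defect mul h (n%:R *: x) y = (n * n)%:R *: triple_defect mul h x y.
Proof.
move=> hD; have hZ m z : h (m%:R *: z) = m%:R *: h z.
  by rewrite !scaler_nat additive_mulrn.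
rewrite /triple_defect !hZ !(ba_scalerAl hX, ba_scalerAr hX) !scalerA -natrM hZ.
by rewrite !scalerBr.
Qed.

End TripleDefectScaling.

Section Control.
Variables (R : realType) (theta p q r s : R).

Definition ctrl (a b : R) := theta * (a `^ p + b `^ q + a `^ r * b `^ s).

Lemma ctrl_scale (g t i j a b : R) : 0 <= theta -> 1 <= t -> 0 <= a -> 0 <= b ->
  i * p <= g -> j * q <= g -> i * r + j * s <= g ->
  ctrl (t `^ i * a) (t `^ j * b) <= t `^ g * ctrl a b.
Proof.
move=> theta0 t1 a0 b0 ipg jqg ijg; have t0 : 0 <= t by exact: le_trans t1.
rewrite /ctrl !powRM ?powR_ge0 // -!powRrM (mulrACA (t `^ (i * r))) -powRD; last first.
  by rewrite (gt_eqF (lt_le_trans ltr01 t1)) implybT.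
rewrite (mulrCA (t `^ g)) ler_wpM2l // !mulrDr.
by rewrite !lerD // ler_wpM2r ?mulr_ge0 ?powR_ge0 // ler_powR.
Qed.

End Control.

Lemma sublinear_le0 (R : realType) (g a K : R) : g < 1 ->
  (forall n : nat, (0 < n)%N -> n%:R * a <= K * n%:R `^ g) -> a <= 0.
Proof.
move=> g1 bound; rewrite leNgt; apply/negP => a0.
have g'0 : 0 < 1 - g by rewrite subr_gt0.
pose T := (`|K| / a) `^ (1 - g)^-1.
have T0 : 0 <= T by exact: powR_ge0.
pose n := Num.bound T; have Tn : T < n%:R := archi_boundP T0.
have n0 : (0 < n)%N by rewrite -(ltr0n R) (le_lt_trans T0 Tn).
have KT : `|K| / a = T `^ (1 - g).
  by rewrite -powRrM mulVf ?gt_eqF // powRr1 // divr_ge0 // ltW.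
have : `|K| / a < n%:R `^ (1 - g) by rewrite KT gt0_ltr_powR ?nnegrE ?ler0n.
rewrite ltr_pdivrMr // => Kn.
have : n%:R `^ g * `|K| < n%:R * a.
  have nE : n%:R = n%:R `^ g * n%:R `^ (1 - g) :> R.
    by rewrite -powRD ?pnatr_eq0 -?lt0n ?n0 ?implybT // addrC subrK powRr1.
  by rewrite [X in _ < X * a]nE -mulrA ltr_pM2l ?powR_gt0 ?ltr0n.
by rewrite ltNge (le_trans (bound n n0)) // mulrC ler_wpM2l ?powR_ge0 ?ler_norm.
Qed.

Section Stability.
Variables (R : realType) (X : completeNormedModType R) (mul : X -> X -> X) (one : X).
Hypothesis hX : banach_algebra mul one.
Variables (h : X -> X) (theta p q r s g : R).
Hypotheses (theta0 : 0 <= theta) (s0 : 0 <= s).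
Hypotheses (g0 : 0 <= g) (g1 : g < 1) (pg : p <= g) (qg : q <= g) (rsg : r + s <= g).
Local Notation ctrl := (ctrl theta p q r s).
Hypothesis triple_bound :
  forall x y, `|triple_defect mul h x y| <= ctrl `|x| `|y|.
Hypothesis add_bound : forall x y, `|add_defect h x y| <= ctrl `|x| `|y|.

Let rg : r <= g. Proof. by rewrite (le_trans _ rsg) // lerDl. Qed.

Let half_le x : x <= g -> 2^-1 * x <= g. Proof. by move: g0; lra. Qed.

Lemma triple_defect_sqrt1_bound t z : 1 <= t ->
  `|triple_defect mul h (Num.sqrt t *: one) z| <= t `^ g * ctrl 1 `|z|.
Proof.
move=> t1; have t0 : 0 <= t := le_trans ler01 t1.
apply: (le_trans (triple_bound _ _)).
rewrite normrZ (ba_norm1 hX) mulr1 ger0_norm ?sqrtr_ge0 // -powR12_sqrt //.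
have := @ctrl_scale _ theta p q r s g t 2^-1 0 1 `|z|.
rewrite mulr1 powRr0 mul1r !mul0r addr0; apply=> //.
- exact: half_le.
- exact: half_le rg.
Qed.

Lemma scaled_add_defect_bound t x y : 1 <= t ->
  t * `|add_defect h x y|
  <= (ctrl `|x| `|y| + ctrl 1 `|x + y| + ctrl 1 `|x| + ctrl 1 `|y|) * t `^ g.
Proof.
move=> t1; have t0 : 0 <= t := le_trans ler01 t1.
have -> : t * `|add_defect h x y| = `|Num.sqrt t ^+ 2 *: add_defect h x y|.
  by rewrite normrZ sqr_sqrtr // ger0_norm.
rewrite (add_defect_scale hX) sqr_sqrtr //.
have scaled_bound : `|add_defect h (t *: x) (t *: y)| <= t `^ g * ctrl `|x| `|y|.
  apply: (le_trans (add_bound _ _)); rewrite !normrZ ger0_norm //.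
  have := @ctrl_scale _ theta p q r s g t 1 1 `|x| `|y|.
  by rewrite powRr1 // !mul1r; apply.
have := ler_normB (add_defect h (t *: x) (t *: y))
  (add_defect (triple_defect mul h (Num.sqrt t *: one)) x y).
have := norm_add_defect_le (triple_defect mul h (Num.sqrt t *: one)) x y.
have := triple_defect_sqrt1_bound (x + y) t1.
have := triple_defect_sqrt1_bound x t1.
have := triple_defect_sqrt1_bound y t1.
rewrite !mulrDl; lra.
Qed.

Lemma stable_additive x y : h (x + y) = h x + h y.
Proof.
apply/add_defect_eq0/eqP; rewrite -normr_le0; apply: (sublinear_le0 g1) => n n0.
by apply: scaled_add_defect_bound; rewrite ler1n.
Qed.

Lemma stable_triple x y : triple_defect mul h x y = 0.
Proof.
apply/eqP; rewrite -normr_le0; apply: (sublinear_le0 (K := ctrl `|x| `|y|) g1) => n n0.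
have n1 : 1 <= n%:R :> R by rewrite ler1n.
have n_ge0 : 0 <= n%:R :> R by exact: le_trans n1.
apply: (@le_trans _ _ `|triple_defect mul h (n%:R *: x) y|).
  rewrite (triple_defect_scale_nat hX); last exact: stable_additive.
  by rewrite normrZ normr_nat natrM ler_wpM2r // ler_peMr.
apply: (le_trans (triple_bound _ _)); rewrite normrZ normr_nat (mulrC (ctrl _ _)).
have := @ctrl_scale _ theta p q r s g n%:R 1 0 `|x| `|y|.
by rewrite powRr1 // powRr0 !mul1r !mul0r addr0; apply.
Qed.

End Stability.

Theorem corollary2p4 (R : realType) (X : completeNormedModType R)
    (mul : X -> X -> X) (one : X) (hX : banach_algebra mul one)
    (h : X -> X) (theta p q r s : R)
    (htheta : 0 < theta < 1) (hp : 0 < p < 1) (hq : 0 < q < 1)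
    (hr : 0 < r < 1) (hs : 0 < s < 1) (hrs : r + s < 1)
    (h1 : forall x y : X,
        `|h (mul (mul x y) x) - mul (mul (h x) y) x - mul (mul x (h y)) x
            - mul (mul x y) (h x)|
          <= theta * (`|x| `^ p + `|y| `^ q + `|x| `^ r * `|y| `^ s))
    (h2 : forall x y : X,
        `|h (x + y) - h x - h y|
          <= theta * (`|x| `^ p + `|y| `^ q + `|x| `^ r * `|y| `^ s)) :
  jordan_triple_derivation mul h.
Proof.
case/andP: htheta => theta0 _; case/andP: hp => p0 p1; case/andP: hs => s0 _.
pose g := Num.max p (Num.max q (r + s)).
have g1 : g < 1 by rewrite !gt_max p1 (andP hq).2 hrs.
have pg : p <= g by rewrite le_max lexx.
have qg : q <= g by rewrite !le_max lexx orbT.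
have rsg : r + s <= g by rewrite !le_max lexx !orbT.
have g0 : 0 <= g by rewrite (le_trans (ltW p0)).
have theta_ge0 := ltW theta0; have s_ge0 := ltW s0.
split=> x y; first exact: (stable_additive hX theta_ge0 s_ge0 g0 g1 pg qg rsg h1 h2).
apply/(triple_defect_eq0 mul h x y).
exact: (stable_triple hX theta_ge0 s_ge0 g0 g1 pg qg rsg h1 h2).
Qed.
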